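(* Let $F$ be a connected compact simple Lie group, $m\ge 2$, and consider the $F^m$-invariant metric on $F^m/\mathrm{diag}(F)$ defined by the inner product $(\cdot,\cdot)$ on $\mathfrak g_m=\mathfrak f\oplus\cdots\oplus\mathfrak f\oplus 0$ given by $\big((x_1,\dots,x_{m-1},0)\otimes Z,(x_1,\dots,x_{m-1},0)\otimes Z\big)=f(x_1,\dots,x_{m-1})\langle Z,Z\rangle$ for all $x_i\in\mathbb R$, $Z\in\mathfrak f$, where $f(x)=\sum_{i,j=1}^{m-1}a_{ij}x_ix_j$ ($a_{ij}=a_{ji}$) is a positive definite quadratic form. The metric is naturally reductive if and only if one of the following holds: (a) $a_{ii}>0$ for all $i$ and $a_{ij}=0$ for $i\neq j$; (b) there is $k\in\{1,\dots,m-1\}$ such that $-a_{ik}=a_{ii}>0$ for all $i\neq k$, $a_{ij}=0$ whenever $i,j,k$ are pairwise distinct, and $a_{kk}>\sum_{i\neq k}a_{ii}$; (c) $a_{ij}=\delta_{ij}\alpha_i-\frac{\alpha_i\alpha_j}{S}$ for $i,j=1,\dots,m-1$, where $\alpha_1,\dots,\alpha_m\in\mathbb R\setminus\{0\}$, $S=\sum_{i=1}^m\alpha_i$, and either $\alpha_i>0$ for all $i=1,\dots,m$, or exactly one $\alpha_i$ is negative and $S<0$.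
   Context: $F$ is a connected compact simple Lie group with Lie algebra $\mathfrak f$; $\mathfrak g=m\mathfrak f$, $\mathfrak h=\mathrm{diag}(\mathfrak f)$. $\langle\cdot,\cdot\rangle$ is minus the Killing form. For $a=(a_1,\dots,a_m)\in\mathbb R^m$ and $X\in\mathfrak f$, $a\otimes X$ denotes $(a_1X,\dots,a_mX)\in\mathfrak g$. $\mathfrak g_m$ is the ideal of $\mathfrak g$ with zero in the last copy of $\mathfrak f$; it is an $\mathrm{Ad}(\mathrm{diag}(F))$-invariant complement of $\mathfrak h$, and $F^m$-invariant metrics on $F^m/\mathrm{diag}(F)$ correspond to $\mathrm{Ad}(\mathrm{diag}(F))$-invariant inner products on it. A metric is naturally reductive if some $\mathrm{Ad}(H)$-invariant complement $\mathfrak p$ of $\mathfrak h$ and the corresponding inner product $(\cdot,\cdot)$ on $\mathfrak p$ satisfy $([X,Y]_{\mathfrak p},X)=0$ for all $X,Y\in\mathfrak p$. *)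

From HB Require Import structures.
From mathcomp Require Import all_boot all_order all_algebra.
Set Implicit Arguments. Unset Strict Implicit. Unset Printing Implicit Defensive.
Import Order.TTheory GRing.Theory Num.Theory.
Local Open Scope ring_scope.

Definition is_lie_bracket (R : nzRingType) {n : nat}
    (br : 'rV[R]_n -> 'rV[R]_n -> 'rV[R]_n) : Prop :=
  [/\ (forall (c : R) X Y Z, br (c *: X + Y) Z = c *: br X Z + br Y Z),
      (forall (c : R) X Y Z, br Z (c *: X + Y) = c *: br Z X + br Z Y),
      (forall X, br X X = 0) &
      (forall X Y Z, br X (br Y Z) + br Y (br Z X) + br Z (br X Y) = 0)].

(* ad X as a matrix (acting on row vectors on the right). *)
Definition ad_mx (R : nzRingType) {n : nat} (br : 'rV[R]_n -> 'rV[R]_n -> 'rV[R]_n)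
    (X : 'rV[R]_n) : 'M[R]_n := lin1_mx (br X).

Definition killing (R : comNzRingType) {n : nat} (br : 'rV[R]_n -> 'rV[R]_n -> 'rV[R]_n)
    (X Y : 'rV[R]_n) : R := \tr (ad_mx br X *m ad_mx br Y).

(* <.,.> = minus the Killing form. *)
Definition kform (R : comNzRingType) {n : nat} (br : 'rV[R]_n -> 'rV[R]_n -> 'rV[R]_n)
    (X Y : 'rV[R]_n) : R := - killing br X Y.

Definition simple_lie (R : fieldType) {n : nat} (br : 'rV[R]_n -> 'rV[R]_n -> 'rV[R]_n) : Prop :=
  is_lie_bracket br /\
  (exists X Y, br X Y != 0) /\
  (forall U : 'M[R]_n,
     (forall X Y : 'rV[R]_n, (X <= U)%MS -> (br X Y <= U)%MS) ->
     \rank U = 0%N \/ \rank U = n).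

(* f is a compact simple Lie algebra (Lie algebra of a connected compact simple
   Lie group): simple with negative definite Killing form. *)
Definition compact_simple_lie (R : realFieldType) {n : nat}
    (br : 'rV[R]_n -> 'rV[R]_n -> 'rV[R]_n) : Prop :=
  simple_lie br /\ (forall X, X != 0 -> killing br X X < 0).

(* g = m f with m = k.+1, modelled as 'M_(k.+1, n): row i is the i-th component. *)
Definition brg (R : nzRingType) {k n : nat} (br : 'rV[R]_n -> 'rV[R]_n -> 'rV[R]_n)
    (X Y : 'M[R]_(k.+1, n)) : 'M[R]_(k.+1, n) :=
  \matrix_(i < k.+1) br (row i X) (row i Y).

Definition tens (R : nzRingType) {k n : nat} (a : 'rV[R]_k.+1) (Z : 'rV[R]_n)
  : 'M[R]_(k.+1, n) := a^T *m Z.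

Definition diagm (R : nzRingType) {k n : nat} (Z : 'rV[R]_n) : 'M[R]_(k.+1, n) :=
  tens (const_mx 1) Z.

Definition in_h (R : nzRingType) {k n : nat} (X : 'M[R]_(k.+1, n)) : Prop :=
  exists Z, X = diagm Z.

Definition in_gm (R : nzRingType) {k n : nat} (X : 'M[R]_(k.+1, n)) : Prop :=
  row ord_max X = 0.

(* projection g -> g_m along h (identifies g/h, and any complement p, with g_m) *)
Definition proj_gm (R : nzRingType) {k n : nat} (X : 'M[R]_(k.+1, n)) : 'M[R]_(k.+1, n) :=
  X - diagm (row ord_max X).

Definition wid (k : nat) (i : 'I_k) : 'I_k.+1 := widen_ord (leqnSn k) i.

(* The Ad(diag F)-invariant inner product on g_m determined by the quadratic
   form f(x) = sum a_ij x_i x_j:  ((x (x) Z),(y (x) W)) = (sum a_ij x_i y_j) <Z,W>. *)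
Definition ipg (R : comNzRingType) {k n : nat} (br : 'rV[R]_n -> 'rV[R]_n -> 'rV[R]_n)
    (a : 'M[R]_k) (X Y : 'M[R]_(k.+1, n)) : R :=
  \sum_(i < k) \sum_(j < k) a i j * kform br (row (wid i) X) (row (wid j) Y).

Definition is_subspace (R : nzRingType) {k n : nat} (P : 'M[R]_(k.+1, n) -> Prop) : Prop :=
  P 0 /\ (forall (c : R) X Y, P X -> P Y -> P (c *: X + Y)).

(* Naturally reductive: there is an ad(h)- (equivalently Ad(H)-, H = diag F
   connected) invariant complement p of h in g such that, with the inner
   product (U,V)_p := (proj U, proj V) transported from g_m, one has
   ([X,Y]_p, X)_p = 0 for all X, Y in p. *)
Definition naturally_reductive (R : comNzRingType) {k n : nat}
    (br : 'rV[R]_n -> 'rV[R]_n -> 'rV[R]_n) (a : 'M[R]_k) : Prop :=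
  exists P : 'M[R]_(k.+1, n) -> Prop,
    [/\ is_subspace P,
        (forall X, P X -> in_h X -> X = 0),
        (forall X, exists U W, [/\ P U, in_h W & X = U + W]),
        (forall W U, in_h W -> P U -> P (brg br W U)) &
        (forall X Y U W, P X -> P Y -> P U -> in_h W -> brg br X Y = U + W ->
           ipg br a (proj_gm U) (proj_gm X) = 0)].

Definition posdef_sym (R : realFieldType) {k : nat} (a : 'M[R]_k) : Prop :=
  a^T = a /\ (forall x : 'rV[R]_k, x != 0 -> 0 < (x *m a *m x^T) 0 0).

Definition cond_a (R : realFieldType) {k : nat} (a : 'M[R]_k) : Prop :=
  (forall i, 0 < a i i) /\ (forall i j, i != j -> a i j = 0).

Definition cond_b (R : realFieldType) {k : nat} (a : 'M[R]_k) : Prop :=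
  exists kk : 'I_k,
    [/\ (forall i, i != kk -> - a i kk = a i i /\ 0 < a i i),
        (forall i j, i != j -> i != kk -> j != kk -> a i j = 0) &
        \sum_(i < k | i != kk) a i i < a kk kk].

Definition cond_c (R : realFieldType) {k : nat} (a : 'M[R]_k) : Prop :=
  exists alpha : 'I_k.+1 -> R,
    let S := \sum_(i < k.+1) alpha i in
    [/\ (forall i, alpha i != 0),
        (forall i j : 'I_k,
           a i j = (i == j)%:R * alpha (wid i) - alpha (wid i) * alpha (wid j) / S) &
        ((forall i, 0 < alpha i) \/
         ((exists i0, alpha i0 < 0 /\ (forall j, alpha j < 0 -> j = i0)) /\ S < 0))].

From HB Require Import structures.
From mathcomp Require Import all_boot all_order all_algebra ring lra zify.
From Stdlib Require Import ClassicalEpsilon.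
Import Order.TTheory GRing.Theory Num.Theory.
Local Open Scope ring_scope.
Set Implicit Arguments. Unset Strict Implicit. Unset Printing Implicit Defensive.

(* An Ad(H)-invariant complement p of h = diag(f) in g = f^m is the kernel of an
   ad(h)-equivariant linear retraction q : g -> f of the diagonal.  Expanding
   ([X,Y]_p, X) with the invariance of the Killing form shows that ker q is naturally
   reductive iff sum_j a_ij [X_j - X_m, X_i] = 0 for every X in ker q and every i.
   Testing this on X supported on two factors l <> j shows that the equivariant maps
   th_l = q o (inclusion of the l-th factor) satisfy a_ll th_j + a_lj (1 - th_l) = 0 on
   [f,f] = f; for one pair of indices this linear system already forces every th_l to be
   a scalar g_l.  Conversely, weights g with a_ll g_j + a_lj (1 - g_l) = 0 make the
   complement {X | X_m + sum_l g_l (X_l - X_m) = 0} naturally reductive.  Solving these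
   equations for positive definite (a_ij): some g_l = 1 gives (b), all g_l = 0 gives (a),
   and otherwise alpha_l = a_ll / (1 - g_l) is proportional to g_l, which is (c); the sign
   conditions come from evaluating the form at suitable two-term vectors. *)

(** * The Lie algebra f and its Killing form *)

Section LieBracket.
Variables (R : comNzRingType) (n : nat) (br : 'rV[R]_n -> 'rV[R]_n -> 'rV[R]_n).
Hypothesis br_lie : is_lie_bracket br.

Lemma br_linl Y : linear (br ^~ Y). Proof. by case: br_lie => + _ _ _ c X Z; apply. Qed.
Lemma br_linr X : linear (br X). Proof. by case: br_lie => _ + _ _ c Y Z; apply. Qed.

Let adl Y : {linear 'rV[R]_n -> 'rV[R]_n} :=
  HB.pack (br ^~ Y) (GRing.isLinear.Build R _ _ _ (br ^~ Y) (br_linl Y)).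
Let adr X : {linear 'rV[R]_n -> 'rV[R]_n} :=
  HB.pack (br X) (GRing.isLinear.Build R _ _ _ (br X) (br_linr X)).

Lemma brDl Y : {morph br^~ Y : X Z / X + Z}. Proof. exact: raddfD (adl Y). Qed.
Lemma brDr X : {morph br X : Y Z / Y + Z}. Proof. exact: raddfD (adr X). Qed.
Lemma brBl Y : {morph br^~ Y : X Z / X - Z}. Proof. exact: raddfB (adl Y). Qed.
Lemma brBr X : {morph br X : Y Z / Y - Z}. Proof. exact: raddfB (adr X). Qed.
Lemma brZl c X Y : br (c *: X) Y = c *: br X Y. Proof. exact: linearZ_LR (adl Y) c X. Qed.
Lemma brZr c X Y : br X (c *: Y) = c *: br X Y. Proof. exact: linearZ_LR (adr X) c Y. Qed.
Lemma brNr X : {morph br X : Y / - Y}. Proof. exact: raddfN (adr X). Qed.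
Lemma br0l Y : br 0 Y = 0. Proof. exact: raddf0 (adl Y). Qed.
Lemma br0r X : br X 0 = 0. Proof. exact: raddf0 (adr X). Qed.
Lemma br_sumr X I (r : seq I) (P : pred I) (F : I -> 'rV[R]_n) :
  br X (\sum_(i <- r | P i) F i) = \sum_(i <- r | P i) br X (F i).
Proof. exact: (raddf_sum (adr X)) r P F. Qed.
Lemma brxx X : br X X = 0. Proof. by case: br_lie => _ _ + _; apply. Qed.
Lemma brC X Y : br X Y = - br Y X.
Proof.
by apply/eqP; rewrite -addr_eq0 -(brxx (X + Y)) brDl !brDr !brxx add0r addr0.
Qed.

Lemma adE X u : u *m ad_mx br X = br X u. Proof. exact: (mul_rV_lin1 (adr X)). Qed.

Lemma ad_mx_linear c X Y : ad_mx br (c *: X + Y) = c *: ad_mx br X + ad_mx br Y.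
Proof. by apply/matrixP => i j; rewrite !mxE brDl brZl !mxE. Qed.

Lemma ad_mx_br X Y :
  ad_mx br (br X Y) = ad_mx br Y *m ad_mx br X - ad_mx br X *m ad_mx br Y.
Proof.
apply/row_matrixP => i; rewrite !rowE mulmxBr !mulmxA !adE.
case: br_lie => _ _ _ /(_ X Y (delta_mx 0 i)).
rewrite (brC (delta_mx 0 i) X) (brC (delta_mx 0 i)) brNr.
by move/eqP; rewrite subr_eq0 => /eqP.
Qed.

Lemma kformC X Y : kform br X Y = kform br Y X.
Proof. by rewrite /kform /killing mxtrace_mulC. Qed.

Lemma kform_linl Y : scalar (kform br ^~ Y).
Proof.
move=> c X Z; rewrite /kform /killing ad_mx_linear mulmxDl -scalemxAl.
by rewrite mxtraceD mxtraceZ opprD mulrN.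
Qed.

Lemma kform_brl X Y Z : kform br (br X Y) Z = kform br X (br Y Z).
Proof.
rewrite /kform /killing !ad_mx_br mulmxBl mulmxBr !linearB /= -!mulmxA.
by rewrite (mxtrace_mulC (ad_mx br Y)) -!mulmxA.
Qed.

Lemma kform_linr X : scalar (kform br X).
Proof. by move=> c Y Z; rewrite !(kformC X) kform_linl. Qed.

Let kfl Y : {scalar 'rV[R]_n} :=
  HB.pack (kform br ^~ Y) (GRing.isLinear.Build R _ _ *%R (kform br ^~ Y) (kform_linl Y)).
Let kfr X : {scalar 'rV[R]_n} :=
  HB.pack (kform br X) (GRing.isLinear.Build R _ _ *%R (kform br X) (kform_linr X)).

Lemma kformDl Y : {morph kform br ^~ Y : X Z / X + Z}. Proof. exact: raddfD (kfl Y). Qed.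
Lemma kformNl Y : {morph kform br ^~ Y : X / - X}. Proof. exact: raddfN (kfl Y). Qed.
Lemma kformNr X : {morph kform br X : Y / - Y}. Proof. exact: raddfN (kfr X). Qed.
Lemma kform0l Y : kform br 0 Y = 0. Proof. exact: raddf0 (kfl Y). Qed.
Lemma kform0r X : kform br X 0 = 0. Proof. exact: raddf0 (kfr X). Qed.
Lemma kformZr c X Y : kform br X (c *: Y) = c * kform br X Y.
Proof. exact: linearZ_LR (kfr X) c Y. Qed.
Lemma kform_sumr X I (r : seq I) (P : pred I) (F : I -> 'rV[R]_n) :
  kform br X (\sum_(i <- r | P i) F i) = \sum_(i <- r | P i) kform br X (F i).
Proof. exact: (raddf_sum (kfr X)) r P F. Qed.

Lemma kform_br_swap X Y Z : kform br (br X Y) Z = kform br Y (br Z X).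
Proof. by rewrite brC kformNl kform_brl -kformNr -brC. Qed.

End LieBracket.

Lemma kform_anisotropic (R : realFieldType) n (br : 'rV[R]_n -> 'rV[R]_n -> 'rV[R]_n) X :
  compact_simple_lie br -> kform br X X = 0 -> X = 0.
Proof.
move=> [_ Kneg] /eqP; rewrite oppr_eq0 => /eqP KX0.
by apply/eqP/negPn/negP => /Kneg; rewrite KX0 ltxx.
Qed.

Lemma simple_lie_perfect (R : fieldType) n (br : 'rV[R]_n -> 'rV[R]_n -> 'rV[R]_n)
    (L : 'rV[R]_n -> 'rV[R]_n) :
  simple_lie br -> linear L -> (forall X Y, L (br X Y) = 0) -> forall Z, L Z = 0.
Proof.
move=> [_ [[X0 [Y0 brXY0]] ideals]] L_lin Lbr Z.
pose Ll : {linear _ -> _} := HB.pack L (GRing.isLinear.Build _ _ _ _ L L_lin).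
have kerL V : (V <= kermx (lin1_mx Ll))%MS = (L V == 0) by rewrite sub_kermx mul_rV_lin1.
have ker_ideal X Y : (X <= kermx (lin1_mx Ll))%MS -> (br X Y <= kermx (lin1_mx Ll))%MS.
  by move=> _; rewrite kerL Lbr.
have [/eqP|full] := ideals _ ker_ideal.
  rewrite mxrank_eq0 => /eqP ker0.
  by move: (Lbr X0 Y0) => /eqP; rewrite -kerL ker0 submx0 (negbTE brXY0).
by apply/eqP; rewrite -kerL submx_full // /row_full full.
Qed.

(** * The product algebra g = f^m *)

Definition emb_factor (R : nzRingType) k n (l : 'I_k) (Z : 'rV[R]_n) : 'M[R]_(k.+1, n) :=
  \matrix_r (if r == wid l then Z else 0).

Lemma wid_inj k : injective (@wid k).
Proof. by move=> i j /(congr1 val) /= /val_inj. Qed.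

Lemma wid_neq_max k (i : 'I_k) : (wid i == ord_max) = false.
Proof. by apply/negbTE; rewrite -val_eqE /= neq_ltn ltn_ord. Qed.

Section ProductAlgebra.
Variables (R : comNzRingType) (k n : nat).
Implicit Types (X Y : 'M[R]_(k.+1, n)) (Z W : 'rV[R]_n) (i j l : 'I_k).

Lemma diagm_is_linear : linear (@diagm R k n).
Proof. by move=> c Z W; rewrite /diagm /tens mulmxDr scalemxAr. Qed.
HB.instance Definition _ := GRing.isLinear.Build R _ _ _ (@diagm R k n) diagm_is_linear.

Lemma row_diagm r Z : row r (diagm Z : 'M_(k.+1, n)) = Z.
Proof. by rewrite /diagm /tens row_mul; apply/rowP => j; rewrite !mxE big_ord1 !mxE mul1r. Qed.

Lemma diagm_inj : injective (@diagm R k n).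
Proof. by move=> Z W /(congr1 (row ord_max)); rewrite !row_diagm. Qed.

Lemma proj_gm_is_linear : linear (@proj_gm R k n).
Proof.
by move=> c X Y; rewrite /proj_gm linearP /= linearP scalerBr opprD addrACA.
Qed.
HB.instance Definition _ := GRing.isLinear.Build R _ _ _ (@proj_gm R k n) proj_gm_is_linear.

Lemma row_proj_gm r X : row r (proj_gm X) = row r X - row ord_max X.
Proof. by rewrite /proj_gm linearB /= row_diagm. Qed.

Lemma proj_gm_diagm Z : proj_gm (diagm Z : 'M_(k.+1, n)) = 0.
Proof. by rewrite /proj_gm row_diagm subrr. Qed.

Lemma emb_factor_is_linear l : linear (@emb_factor R k n l).
Proof.
move=> c Z W; apply/row_matrixP => r; rewrite linearD linearZ /= !rowK.
by case: ifP; rewrite ?scaler0 ?addr0.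
Qed.
HB.instance Definition _ (l : 'I_k) :=
  GRing.isLinear.Build R 'rV[R]_n 'M[R]_(k.+1, n) *:%R
    (@emb_factor R k n l) (emb_factor_is_linear l).

Lemma row_emb_factor l i Z : row (wid i) (emb_factor l Z) = if i == l then Z else 0.
Proof. by rewrite rowK inj_eq //; apply: wid_inj. Qed.

Lemma proj_gm_emb_factor l Z : proj_gm (emb_factor l Z) = emb_factor l Z.
Proof. by rewrite /proj_gm rowK eq_sym wid_neq_max linear0 subr0. Qed.

End ProductAlgebra.

(** * Natural reductivity through retractions onto h *)

Lemma sum_sym_skew (R : numFieldType) (V : lmodType R) k (M : 'I_k -> 'I_k -> R)
    (F : 'I_k -> 'I_k -> V) :
  (forall i j, M i j = M j i) -> (forall i j, F i j = - F j i) ->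
  \sum_i \sum_j M i j *: F i j = 0.
Proof.
move=> Msym Fskew; set S := (X in X = 0).
have : S = - S.
  rewrite {1}/S exchange_big -sumrN; apply: eq_bigr => i _.
  by rewrite -sumrN; apply: eq_bigr => j _; rewrite Msym Fskew scalerN.
move/eqP; rewrite -subr_eq0 opprK -mulr2n -scaler_nat scaler_eq0 pnatr_eq0 /=.
by move/eqP.
Qed.

Section NaturalReductivity.
Variables (R : realFieldType) (k n : nat) (br : 'rV[R]_n -> 'rV[R]_n -> 'rV[R]_n).
Variable a : 'M[R]_k.
Hypotheses (br_lie : is_lie_bracket br) (a_sym : a^T = a).
Implicit Types (X Y : 'M[R]_(k.+1, n)) (Z W : 'rV[R]_n) (i j l : 'I_k).

(* The complement belonging to q is ker q; its ad(h)-invariance is the equivariance of q. *)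
Definition h_retraction (q : {linear 'M[R]_(k.+1, n) -> 'rV[R]_n}) :=
  (forall Z, q (diagm Z) = Z) /\ (forall W X, q (brg br (diagm W) X) = br W (q X)).

Definition nr_defect X i : 'rV[R]_n :=
  \sum_j a i j *: br (row (wid j) (proj_gm X)) (row (wid i) X).

Lemma ipg_proj_brg X Y :
  ipg br a (proj_gm (brg br X Y)) (proj_gm X) =
  \sum_i kform br (row (wid i) (proj_gm Y)) (nr_defect X i).
Proof.
set u := fun j => row (wid j) (proj_gm X).
(* [X_i, Y_i] - [X_m, Y_m] = [X_i, Y_i - Y_m] + [X_i - X_m, Y_m]; the second part
   contributes a term skew in (i, j). *)
have split_kform i j :
    kform br (row (wid i) (proj_gm (brg br X Y))) (u j) =
    kform br (row (wid i) (proj_gm Y)) (br (u j) (row (wid i) X)) +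
    kform br (row ord_max Y) (br (u j) (u i)).
  rewrite /u !row_proj_gm !rowK.
  have -> : br (row (wid i) X) (row (wid i) Y) - br (row ord_max X) (row ord_max Y) =
      br (row (wid i) X) (row (wid i) Y - row ord_max Y) +
      br (row (wid i) X - row ord_max X) (row ord_max Y).
    by rewrite (brBr br_lie) (brBl br_lie) addrA subrK.
  by rewrite [LHS]kformDl // !kform_br_swap.
rewrite /ipg.
under eq_bigr => i _ do under eq_bigr => j _ do rewrite split_kform mulrDr.
under eq_bigr => i _ do rewrite big_split /=.
rewrite big_split /= [X in _ + X](sum_sym_skew (V := R^o)) ?addr0; first last.
- by move=> i j; rewrite (brC br_lie) kformNr.
- by move=> i j; rewrite -{1}a_sym mxE.
apply: eq_bigr => i _; rewrite kform_sumr //.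
by apply: eq_bigr => j _; rewrite kformZr.
Qed.

Lemma brg_diagmB W X Z :
  brg br (diagm W) (X - diagm Z) = brg br (diagm W) X - diagm (br W Z).
Proof.
by apply/row_matrixP => r; rewrite !linearB /= !rowK linearB /= !row_diagm (brBr br_lie).
Qed.

Lemma complement_retraction (P : 'M[R]_(k.+1, n) -> Prop) :
  is_subspace P -> (forall X, P X -> in_h X -> X = 0) ->
  (forall X, exists U H, [/\ P U, in_h H & X = U + H]) ->
  (forall H U, in_h H -> P U -> P (brg br H U)) ->
  exists2 q, h_retraction q & forall X, P X <-> q X = 0.
Proof.
move=> [P0 PD] Ph Pspan Pinv.
have PB X Y : P X -> P Y -> P (X - Y).
  by move=> PX PY; rewrite addrC -scaleN1r; apply: PD.
have Pq X : exists Z, P (X - diagm Z).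
  by have [U [H [PU [Z ->] ->]]] := Pspan X; exists Z; rewrite addrK.
pose q X := sval (constructive_indefinite_description _ (Pq X)).
have qP X : P (X - diagm (q X)) := svalP (constructive_indefinite_description _ (Pq X)).
have qE X Z : P (X - diagm Z) -> q X = Z.
  move=> PZ; apply/eqP; rewrite eq_sym -subr_eq0; apply/eqP/(@diagm_inj R k n).
  rewrite linear0; apply: Ph; last by exists (Z - q X).
  have -> : diagm (Z - q X) = X - diagm (q X) - (X - diagm Z) :> 'M_(k.+1, n).
    by rewrite linearB /= opprB [RHS]addrC addrA subrK.
  exact: PB.
have q_lin : linear q.
  move=> c X Y; apply: qE; rewrite linearP opprD addrACA -scalerBr.
  by apply: PD; apply: qP.
pose ql : {linear _ -> _} := HB.pack q (GRing.isLinear.Build _ _ _ _ q q_lin).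
exists ql; first split.
- by move=> Z; apply: qE; rewrite subrr.
- move=> W X; apply: qE; rewrite -brg_diagmB.
  by apply: Pinv; [exists W | apply: qP].
move=> X; split => [PX | qX]; first by apply: qE; rewrite linear0 subr0.
by have := qP X; rewrite [q X]qX linear0 subr0.
Qed.

Lemma natred_retractionP :
  naturally_reductive br a <->
  exists2 q, h_retraction q & forall X Y, q X = 0 -> q Y = 0 ->
    ipg br a (proj_gm (brg br X Y)) (proj_gm X) = 0.
Proof.
split=> [[P [Psub Ph Pspan Pinv Pnr]] | [q [qdiag qequiv] qnr]].
  have [q qret qP] := complement_retraction Psub Ph Pspan Pinv.
  exists q => // X Y qX qY.
  have [U [H [PU [Z HE] XYE]]] := Pspan (brg br X Y).
  have -> : proj_gm (brg br X Y) = proj_gm U by rewrite XYE HE linearD /= proj_gm_diagm addr0.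
  by apply: (Pnr X Y U H) => //; [apply/qP | apply/qP | exists Z].
exists (fun X => q X = 0); split.
- by split=> [|c X Y qX qY]; rewrite ?linear0 // linearP /= qX qY scaler0 addr0.
- by move=> X qX [Z XE]; move: qX; rewrite XE qdiag => ->; rewrite linear0.
- move=> X; exists (X - diagm (q X)), (diagm (q X)); split; last by rewrite subrK.
  + by rewrite linearB /= qdiag subrr.
  + by exists (q X).
- by move=> H U [W ->] qU; rewrite qequiv qU (br0r br_lie).
move=> X Y U H qX qY _ [Z HE] XYE.
have -> : U = brg br X Y - diagm Z by rewrite XYE -HE addrK.
by rewrite linearB /= proj_gm_diagm subr0; apply: qnr.
Qed.

Lemma retraction_defectP q :
  compact_simple_lie br -> h_retraction q ->
  (forall X Y, q X = 0 -> q Y = 0 -> ipg br a (proj_gm (brg br X Y)) (proj_gm X) = 0) <->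
  (forall X, q X = 0 -> forall i, nr_defect X i = 0).
Proof.
move=> br_cpt [qdiag _]; split=> [qnr X qX l | qdef X Y qX _]; last first.
  by rewrite ipg_proj_brg big1 // => i _; rewrite qdef // kform0r.
apply: (kform_anisotropic br_cpt).
set Q := nr_defect X l; set E := emb_factor l Q.
have := qnr X (E - diagm (q E)) qX; rewrite linearB /= qdiag subrr => /(_ erefl).
rewrite ipg_proj_brg linearB /= proj_gm_diagm subr0 proj_gm_emb_factor.
rewrite (bigD1 l) //= big1 => [|i il]; first by rewrite row_emb_factor eqxx addr0.
by rewrite row_emb_factor (negbTE il) kform0l.
Qed.

End NaturalReductivity.

(** * Weights of a naturally reductive complement *)

Definition nr_weights (R : nzRingType) k (a : 'M[R]_k) (g : 'I_k -> R) :=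
  forall l j, l != j -> a l l * g j + a l j * (1 - g l) = 0.

Lemma nr_weights_sym (R : fieldType) k (a : 'M[R]_k) (g : 'I_k -> R) :
  (forall i, a i i != 0) -> nr_weights a g ->
  forall i j p, a i j * ((i == p)%:R - g p) = a i p * ((i == j)%:R - g j).
Proof.
move=> a_diag wg i j p.
have [-> // | jp] := eqVneq j p.
have wE q : i != q -> a i q * (1 - g i) = - (a i i * g q).
  by move=> iq; apply/eqP; rewrite -addr_eq0 addrC wg.
have [ij | ij] := eqVneq i j.
  by subst j; rewrite (negbTE jp) mulr0n mulr1n sub0r mulrN wE.
have [ip | ip] := eqVneq i p.
  by subst p; rewrite mulr0n mulr1n sub0r mulrN wE.
rewrite !mulr0n !sub0r !mulrN; congr (- _).
have [gi1 | gi1] := eqVneq (g i) 1.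
  have gq0 q : i != q -> g q = 0.
    move/wE; rewrite gi1 subrr mulr0 => /esym/eqP.
    by rewrite oppr_eq0 mulf_eq0 (negbTE (a_diag i)) => /eqP.
  by rewrite !gq0 // !mulr0.
have gi1' : 1 - g i != 0 by rewrite subr_eq0 eq_sym.
apply: (mulIf gi1'); rewrite mulrAC wE // -mulrA [g j * _]mulrC mulrA wE //; ring.
Qed.

Definition hpart (R : nzRingType) k n (g : 'I_k -> R) (X : 'M[R]_(k.+1, n)) : 'rV[R]_n :=
  row ord_max X + \sum_l g l *: row (wid l) (proj_gm X).

Section WeightedComplement.
Variables (R : realFieldType) (k n : nat) (br : 'rV[R]_n -> 'rV[R]_n -> 'rV[R]_n).
Variables (a : 'M[R]_k) (g : 'I_k -> R).
Hypothesis br_lie : is_lie_bracket br.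
Implicit Types (X Y : 'M[R]_(k.+1, n)) (Z W : 'rV[R]_n) (i j l p : 'I_k).

Lemma hpart_is_linear : linear (hpart g : 'M[R]_(k.+1, n) -> _).
Proof.
move=> c X Y; rewrite /hpart linearP /= [in RHS]scalerDr addrACA scaler_sumr -big_split /=.
by congr (_ + _); apply: eq_bigr => l _; rewrite !linearP.
Qed.
HB.instance Definition _ :=
  GRing.isLinear.Build R _ _ _ (hpart g : 'M[R]_(k.+1, n) -> _) hpart_is_linear.

Lemma hpart_retraction : h_retraction br (hpart g : 'M[R]_(k.+1, n) -> _).
Proof.
split=> [Z | W X]; rewrite /= /hpart.
  by rewrite row_diagm proj_gm_diagm big1 ?addr0 // => l _; rewrite linear0 scaler0.
rewrite rowK row_diagm (brDr br_lie) (br_sumr br_lie); congr (_ + _).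
apply: eq_bigr => l _; rewrite (brZr br_lie) !row_proj_gm !rowK !row_diagm.
by rewrite (brBr br_lie).
Qed.

Lemma hpart_defect X i :
  (forall l, a l l != 0) -> nr_weights a g -> hpart g X = 0 -> nr_defect br a X i = 0.
Proof.
move=> a_diag wg hX0; set u := fun p => row (wid p) (proj_gm X).
have Xi : row (wid i) X = \sum_p ((i == p)%:R - g p) *: u p.
  under eq_bigr do rewrite scalerBl.
  rewrite sumrB (bigD1 i) //= eqxx scale1r big1 ?addr0 => [|p /negbTE]; last first.
    by rewrite eq_sym => ->; rewrite scale0r.
  move: hX0; rewrite /hpart addrC => /eqP; rewrite addr_eq0 => /eqP ->.
  by rewrite opprK /u row_proj_gm subrK.
rewrite /nr_defect -/u Xi.
under eq_bigr => j _ do rewrite (br_sumr br_lie) scaler_sumr.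
under eq_bigr => j _ do under eq_bigr => p _ do rewrite (brZr br_lie) scalerA.
by apply: sum_sym_skew => [j p | j p]; [exact: nr_weights_sym | exact: (brC br_lie)].
Qed.

End WeightedComplement.

Section Necessity.
Variables (R : realFieldType) (k n : nat) (br : 'rV[R]_n -> 'rV[R]_n -> 'rV[R]_n).
Variables (a : 'M[R]_k) (q : {linear 'M[R]_(k.+1, n) -> 'rV[R]_n}).
Hypotheses (br_cpt : compact_simple_lie br) (q_ret : h_retraction br q).
Hypothesis q_defect : forall X, q X = 0 -> forall i, nr_defect br a X i = 0.
Implicit Types (Z W : 'rV[R]_n) (i j l p : 'I_k).

Let br_lie : is_lie_bracket br. Proof. by case: br_cpt => [[]]. Qed.

Let th l Z := q (emb_factor l Z).

Let th_equivariant l W Z : th l (br W Z) = br W (th l Z).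
Proof.
rewrite /th; case: q_ret => _ <-; congr (q _).
by apply/row_matrixP => r; rewrite !rowK row_diagm; case: ifP; rewrite ?(br0r br_lie).
Qed.

Lemma retraction_weight_eqs l j : l != j ->
  forall Z, a l l *: th j Z + a l j *: (Z - th l Z) = 0.
Proof.
move=> lj; apply: (simple_lie_perfect br_cpt.1).
  by move=> c Z W; rewrite /th !linearP /=; apply/rowP => t; rewrite !mxE; ring.
move=> A B; set E := emb_factor l A + emb_factor j B.
have qX : q (E - diagm (q E)) = 0 by rewrite linearB /=; case: q_ret => -> _; rewrite subrr.
have := q_defect qX l.
rewrite /nr_defect linearB /= proj_gm_diagm subr0 linearD /= !proj_gm_emb_factor.
rewrite (bigD1 l) //= (bigD1 j) 1?eq_sym //= big1 => [|p /andP [pl pj]]; last first.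
  by rewrite linearD /= !row_emb_factor (negbTE pl) (negbTE pj) addr0 (br0l br_lie) scaler0.
have Xl : row (wid l) (E - diagm (q E)) = A - (th l A + th j B).
  by rewrite linearB /= row_diagm linearD /= !row_emb_factor eqxx (negbTE lj) addr0 /th linearD.
rewrite Xl !linearD /= !row_emb_factor eqxx (negbTE lj) eq_sym (negbTE lj) eqxx addr0 add0r.
rewrite addr0 !(brDr br_lie) !(brNr br_lie) -!th_equivariant.
rewrite !(brxx br_lie) (brC br_lie B A) /th !linear0 !linearN /= => defect0.
apply/eqP; rewrite -oppr_eq0 -defect0; apply/eqP/rowP => t; rewrite !mxE; ring.
Qed.

End Necessity.

Lemma weight_eqs_scalar (R : fieldType) k n (a : 'M[R]_k)
    (th : 'I_k -> 'rV[R]_n -> 'rV[R]_n) (i0 i1 : 'I_k) :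
  i0 != i1 -> a i0 i0 != 0 -> a i0 i0 * a i1 i1 - a i0 i1 * a i1 i0 != 0 ->
  (forall l j, l != j -> forall Z, a l l *: th j Z + a l j *: (Z - th l Z) = 0) ->
  exists g, forall l Z, th l Z = g l *: Z.
Proof.
move=> i01 a00 det0 eqs; set det := _ - _ in det0.
pose g0 := - a i1 i0 * (a i0 i0 + a i0 i1) / det.
pose g l := if l == i0 then g0 else - a i0 l * (1 - g0) / a i0 i0.
have i10 : i1 != i0 by rewrite eq_sym.
have th0 Z : th i0 Z = g0 *: Z.
  apply/rowP => t; move: (eqs _ _ i01 Z) (eqs i1 i0 i10 Z).
  move=> /rowP /(_ t) e01 /rowP /(_ t) e10; rewrite !mxE in e01 e10 *.
  (* eliminate th i1 Z; this replaces Schur's lemma *)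
  have := congr2 (fun x y => a i0 i0 * x + a i1 i0 * y) e10 e01; rewrite /= !mulr0 addr0.
  move=> elim; apply: (mulfI det0); apply/eqP; rewrite -subr_eq0 -elim.
  by apply/eqP; rewrite /g0 /det; field; rewrite -/det.
exists g => l Z; rewrite /g; case: eqP => [-> | /eqP l0]; first exact: th0.
have i0l : i0 != l by rewrite eq_sym.
apply/rowP => t; move: (eqs i0 l i0l Z) => /rowP /(_ t).
rewrite !mxE th0 mxE => e.
by apply: (mulfI a00); apply/eqP; rewrite -subr_eq0 -e; apply/eqP; field.
Qed.

(** * Positive definite forms and the conditions (a)-(c) *)

Definition bform (R : nzRingType) k (a : 'M[R]_k) (x y : 'rV[R]_k) : R := (x *m a *m y^T) 0 0.

Section BilinearForm.
Variables (R : comNzRingType) (k : nat) (a : 'M[R]_k).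
Implicit Types (x y : 'rV[R]_k) (p q : 'I_k).

Lemma bformDl x y z : bform a (x + y) z = bform a x z + bform a y z.
Proof. by rewrite /bform !mulmxDl mxE. Qed.

Lemma bformZl s x y : bform a (s *: x) y = s * bform a x y.
Proof. by rewrite /bform -!scalemxAl mxE. Qed.

Lemma bformDr x y z : bform a x (y + z) = bform a x y + bform a x z.
Proof. by rewrite /bform linearD /= mulmxDr mxE. Qed.

Lemma bformZr s x y : bform a x (s *: y) = s * bform a x y.
Proof. by rewrite /bform linearZ /= -scalemxAr mxE. Qed.

Lemma bformC x y : a^T = a -> bform a x y = bform a y x.
Proof.
move=> a_sym; have -> : bform a x y = (x *m a *m y^T)^T 0 0 by rewrite mxE.
by rewrite !trmx_mul trmxK a_sym mulmxA.
Qed.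

Lemma bform_comb s t x y : a^T = a ->
  bform a (s *: x + t *: y) (s *: x + t *: y) =
  s ^+ 2 * bform a x x + 2 * s * t * bform a x y + t ^+ 2 * bform a y y.
Proof.
move=> a_sym; rewrite !bformDl !bformDr !bformZl !bformZr (bformC y x) //; ring.
Qed.

Lemma bform_delta p q : bform a (delta_mx 0 p) (delta_mx 0 q) = a p q.
Proof. by rewrite /bform trmx_delta -rowE -colE !mxE. Qed.

Lemma bform_const1_delta q : bform a (const_mx 1) (delta_mx 0 q) = \sum_p a p q.
Proof.
by rewrite /bform trmx_delta -colE !mxE; apply: eq_bigr => p _; rewrite mxE mul1r.
Qed.

Lemma bform_const1 : bform a (const_mx 1) (const_mx 1) = \sum_p \sum_q a p q.
Proof.
rewrite /bform mxE exchange_big; apply: eq_bigr => q _.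
by rewrite !mxE mulr1; apply: eq_bigr => p _; rewrite mxE mul1r.
Qed.

End BilinearForm.

Section PositiveDefinite.
Variables (R : realFieldType) (k : nat) (a : 'M[R]_k).
Hypothesis a_pd : posdef_sym a.
Implicit Types (p q : 'I_k) (s t : R).

Let a_sym : a^T = a. Proof. by case: a_pd. Qed.

Let bform_gt0 x : x != 0 -> 0 < bform a x x. Proof. by case: a_pd => _; apply. Qed.

Lemma posdef_symE p q : a p q = a q p.
Proof. by rewrite -[in LHS]a_sym mxE. Qed.

Lemma posdef_diag p : 0 < a p p.
Proof.
rewrite -bform_delta bform_gt0 //; apply/eqP => /rowP /(_ p)/eqP.
by rewrite !mxE !eqxx oner_eq0.
Qed.

Lemma posdef_total : (0 < k)%N -> 0 < \sum_p \sum_q a p q.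
Proof.
move=> k_gt0; rewrite -bform_const1 bform_gt0 //.
by apply/eqP => /rowP /(_ (Ordinal k_gt0))/eqP; rewrite !mxE oner_eq0.
Qed.

Lemma posdef_pair p q s t : p != q -> s != 0 ->
  0 < s ^+ 2 * a p p + 2 * s * t * a p q + t ^+ 2 * a q q.
Proof.
move=> pq s0; rewrite -!bform_delta -bform_comb // bform_gt0 //.
apply: contraNneq s0 => /rowP /(_ p); rewrite !mxE !eqxx (negbTE pq) /=.
by rewrite mulr1 mulr0 addr0 => ->.
Qed.

Lemma posdef_total_pair i s t : s + t != 0 ->
  0 < s ^+ 2 * (\sum_p \sum_q a p q) + 2 * s * t * (\sum_p a p i) + t ^+ 2 * a i i.
Proof.
move=> st0; rewrite -bform_delta -bform_const1 -bform_const1_delta -bform_comb //.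
rewrite bform_gt0 //; apply: contraNneq st0 => /rowP /(_ i).
by rewrite !mxE !eqxx !mulr1 => ->.
Qed.

Lemma posdef_det2 p q : p != q -> 0 < a p p * a q q - a p q * a q p.
Proof.
move=> pq; have := @posdef_pair p q (a q q) (- a p q) pq (lt0r_neq0 (posdef_diag q)).
rewrite (posdef_symE q p).
have -> : a q q ^+ 2 * a p p + 2 * a q q * - a p q * a p q + (- a p q) ^+ 2 * a q q =
          a q q * (a p p * a q q - a p q * a p q) by ring.
by rewrite pmulr_rgt0 // posdef_diag.
Qed.

End PositiveDefinite.

Lemma wid_lift_max k (l : 'I_k) : wid l = lift ord_max l.
Proof. by apply: val_inj; rewrite [RHS]lift_max. Qed.

Lemma ord_max_or_wid k (i : 'I_k.+1) : i = ord_max \/ exists l, i = wid l.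
Proof.
case: (unliftP ord_max i) => [l ->|->]; [right; exists l | by left].
by rewrite wid_lift_max.
Qed.

Section AlphaForm.
Variables (R : realFieldType) (k : nat) (a : 'M[R]_k) (al : 'I_k.+1 -> R).
Let S := \sum_i al i.
Hypotheses (a_pd : posdef_sym a) (S_neq0 : S != 0) (al_neq0 : forall l, al (wid l) != 0).
Hypothesis aE : forall i j, a i j = (i == j)%:R * al (wid i) - al (wid i) * al (wid j) / S.

Let sum_wid : \sum_l al (wid l) = S - al ord_max.
Proof. by rewrite /S big_ord_recr addrK. Qed.

Lemma alpha_row_sum p : \sum_q a p q = al (wid p) * al ord_max / S.
Proof.
under eq_bigr do rewrite aE.
rewrite sumrB (bigD1 p) //= big1 ?addr0 => [|q qp]; last first.
  by rewrite eq_sym (negbTE qp) mul0r.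
by rewrite -mulr_suml -mulr_sumr sum_wid eqxx mul1r; field.
Qed.

Lemma alpha_total : \sum_p \sum_q a p q = (S - al ord_max) * al ord_max / S.
Proof. by under eq_bigr do rewrite alpha_row_sum; rewrite -!mulr_suml sum_wid. Qed.

(* The form equals al_i al_j (al_i + al_j) at al_q e_p - al_p e_q, and at
   al_l (1,...,1) + al_m e_l for the pair (l, m). *)
Lemma alpha_two_neg i j : i != j -> al i < 0 -> al j < 0 -> False.
Proof.
have negprod (u v : R) : u < 0 -> v < 0 -> u * v * (u + v) < 0.
  move=> u0 v0; have : 0 < u * v by nra.
  nra.
wlog [l ->] : i j / exists l, i = wid l.
  move=> H ij; case: (ord_max_or_wid i) => [iE|wi]; last exact: H wi ij.
  case: (ord_max_or_wid j) => [jE|wj]; first by rewrite iE jE eqxx in ij.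
  by move=> ai aj; apply: (H j i wj); rewrite // eq_sym.
case: (ord_max_or_wid j) => [-> _ al0 am0 | [p ->]].
  have := posdef_total_pair a_pd l (s := al (wid l)) (t := al ord_max)
    (ltr0_neq0 (ltr_nDr am0 al0)).
  have col_sum : \sum_p a p l = al (wid l) * al ord_max / S.
    by rewrite -alpha_row_sum; apply: eq_bigr => p _; apply: posdef_symE.
  rewrite alpha_total col_sum aE eqxx mul1r.
  have -> : al (wid l) ^+ 2 * ((S - al ord_max) * al ord_max / S) +
            2 * al (wid l) * al ord_max * (al (wid l) * al ord_max / S) +
            al ord_max ^+ 2 * (al (wid l) - al (wid l) * al (wid l) / S) =
            al (wid l) * al ord_max * (al (wid l) + al ord_max) by field.
  by rewrite ltNge ltW // negprod.
rewrite (inj_eq (@wid_inj k)) => lp all0 alp0.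
have := posdef_pair a_pd (- al (wid l)) lp (al_neq0 p).
rewrite !aE !eqxx (negbTE lp) /=.
have -> : al (wid p) ^+ 2 * (1 * al (wid l) - al (wid l) * al (wid l) / S) +
          2 * al (wid p) * - al (wid l) * (0 * al (wid l) - al (wid l) * al (wid p) / S) +
          (- al (wid l)) ^+ 2 * (1 * al (wid p) - al (wid p) * al (wid p) / S) =
          al (wid l) * al (wid p) * (al (wid l) + al (wid p)) by field.
by rewrite ltNge ltW // negprod.
Qed.

Lemma alpha_cond_c : (0 < k)%N -> cond_c a.
Proof.
move=> k_gt0; have := posdef_total a_pd k_gt0; rewrite alpha_total => tot.
have am_neq0 : al ord_max != 0 by apply: contraTneq tot => ->; rewrite mulr0 mul0r ltxx.
exists al; split => // [i|]; first by case: (ord_max_or_wid i) => [-> | [l ->]].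
have [S_lt0|S_gt0|S0] := ltgtP S 0; last by move: S_neq0; rewrite S0 eqxx.
  right; split => //; case: (boolP [exists i, al i < 0]) => [/existsP [i0 neg0] | /existsPn nonneg].
    exists i0; split => // j negj; apply/eqP/negPn/negP => ji0.
    exact: (alpha_two_neg ji0 negj neg0).
  have : 0 <= S by apply: sumr_ge0 => i _; rewrite leNgt nonneg.
  by rewrite leNgt S_lt0.
left; have al_wid_gt0 l : 0 < al (wid l).
  have := posdef_diag a_pd l; rewrite aE eqxx mul1r.
  have -> : al (wid l) - al (wid l) * al (wid l) / S = al (wid l) * (S - al (wid l)) / S by field.
  rewrite pmulr_lgt0 ?invr_gt0 // => pos; rewrite ltNge; apply/negP => al_le0; nra.
move=> i; case: (ord_max_or_wid i) => [-> | [l ->]] //.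
have T_gt0 : 0 < S - al ord_max.
  rewrite -sum_wid (bigD1 (Ordinal k_gt0)) //= ltr_wpDr ?al_wid_gt0 //.
  by rewrite sumr_ge0 // => l _; rewrite ltW.
by move: tot; rewrite pmulr_lgt0 ?invr_gt0 // pmulr_rgt0.
Qed.

End AlphaForm.

Section WeightConditions.
Variables (R : realFieldType) (k : nat) (a : 'M[R]_k).
Implicit Types (g : 'I_k -> R) (i j l p : 'I_k).

Lemma cond_nr_weights : cond_a a \/ cond_b a \/ cond_c a -> exists g, nr_weights a g.
Proof.
case=> [[_ a_offdiag] | [[kk [a_kk a_off _]] | [al [_ aE al_sign]]]].
- by exists (fun=> 0) => l j lj; rewrite /= (a_offdiag l j lj) mulr0 mul0r addr0.
- exists (fun l => (l == kk)%:R) => l j lj.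
  have [lk | lk] := eqVneq l kk.
    by rewrite -lk eq_sym (negbTE lj) mulr0n mulr1n subrr !mulr0 addr0.
  have [jk | jk] := eqVneq j kk; rewrite mulr0n subr0 mulr1.
    by rewrite jk; have [<- _] := a_kk l lk; rewrite mulr1 addNr.
  by rewrite (a_off l j) // mulr0 addr0.
- set S := \sum_(i < k.+1) al i in aE al_sign.
  have S_neq0 : S != 0.
    case: al_sign => [al_gt0 | [_ S_lt0]]; last exact: ltr0_neq0.
    by rewrite lt0r_neq0 // /S big_ord_recr ltr_wpDl ?al_gt0 // sumr_ge0 // => i _; rewrite ltW.
  exists (fun l => al (wid l) / S) => l j lj.
  by rewrite !aE eqxx (negbTE lj) /=; field.
Qed.

Hypothesis a_pd : posdef_sym a.

Lemma nr_weights_cond_b g l : nr_weights a g -> g l = 1 -> cond_b a.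
Proof.
move=> wg gl1.
have g0 j : j != l -> g j = 0.
  move=> jl; have := wg l j; rewrite eq_sym => /(_ jl); rewrite gl1 subrr mulr0 addr0 => /eqP.
  by rewrite mulf_eq0 (negbTE (lt0r_neq0 (posdef_diag a_pd l))) => /eqP.
have a_il i : i != l -> - a i l = a i i.
  by move=> il; move/eqP: (wg i l il); rewrite gl1 g0 // subr0 !mulr1 addr_eq0 => /eqP ->.
have a_off i j : i != j -> i != l -> j != l -> a i j = 0.
  by move=> ij il jl; move: (wg i j ij); rewrite !g0 // mulr0 subr0 mulr1 add0r.
exists l; split => // [i il|]; first by split; [exact: a_il | exact: posdef_diag].
have := posdef_total a_pd (leq_ltn_trans (leq0n l) (ltn_ord l)).
rewrite (bigD1 l) //= [X in _ + X]big1 ?addr0 => [|p pl]; last first.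
  rewrite (bigD1 p) //= (bigD1 l) 1?eq_sym //= big1 ?addr0 => [|q /andP [qp ql]].
    by rewrite -(a_il p pl) addNr.
  by rewrite a_off // eq_sym.
have row_l : \sum_(q < k | q != l) a l q = - \sum_(q < k | q != l) a q q.
  by rewrite -sumrN; apply: eq_bigr => q ql; rewrite (posdef_symE a_pd) -(a_il q ql) opprK.
by rewrite (bigD1 l) //= row_l subr_gt0.
Qed.

Lemma nr_weights_cond g : (0 < k)%N -> nr_weights a g -> cond_a a \/ cond_b a \/ cond_c a.
Proof.
move=> k_gt0 wg.
have [/existsP [l /eqP gl1] | /existsPn g_neq1] := boolP [exists l, g l == 1].
  by right; left; apply: nr_weights_cond_b wg gl1.
have g1 l : 1 - g l != 0 by rewrite subr_eq0 eq_sym g_neq1.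
pose al l := a l l / (1 - g l).
have al_neq0 l : al l != 0 by rewrite mulf_neq0 ?invr_eq0 // lt0r_neq0 ?posdef_diag.
have a_off l j : l != j -> a l j = - g j * al l.
  move=> lj; apply: (mulIf (g1 l)); move/eqP: (wg l j lj); rewrite addrC addr_eq0 => /eqP ->.
  by rewrite /al; field.
have [/existsP [p gp_neq0] | /existsPn g0] := boolP [exists p, g p != 0]; last first.
  left; split => [i | i j ij]; first exact: posdef_diag.
  by rewrite a_off // (eqP (negbNE (g0 j))) oppr0 mul0r.
right; right; set S := al p / g p.
have S_neq0 : S != 0 by rewrite mulf_neq0 ?invr_eq0.
have al_gS l : al l = g l * S.
  have [-> | lp] := eqVneq l p; first by rewrite /S; field.
  have pl : p != l by rewrite eq_sym.
  have := a_off p l pl; rewrite (posdef_symE a_pd) a_off // => /eqP.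
  rewrite !mulNr eqr_opp => /eqP ga; rewrite /S; apply: (mulfI gp_neq0).
  by rewrite ga; field.
pose alpha (i : 'I_k.+1) := oapp al (S - \sum_l al l) (unlift ord_max i).
have alpha_wid l : alpha (wid l) = al l by rewrite /alpha wid_lift_max liftK.
have sum_alpha : \sum_(i < k.+1) alpha i = S.
  rewrite big_ord_recr /= [in X in X + _](eq_bigr _ (fun l _ => alpha_wid l)).
  by rewrite /alpha unlift_none addrC subrK.
apply: (@alpha_cond_c R k a alpha) => //; rewrite ?sum_alpha //.
  by move=> l; rewrite alpha_wid.
move=> i j; rewrite !alpha_wid; have [-> | ij] := eqVneq i j.
  have ajj : a j j = al j * (1 - g j) by rewrite /al; field.
  by rewrite mul1r {1}ajj al_gS; field.
by rewrite mul0r sub0r a_off // (al_gS i) (al_gS j); field.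
Qed.

End WeightConditions.

Lemma natred_nr_weightsP (R : realFieldType) k n (br : 'rV[R]_n -> 'rV[R]_n -> 'rV[R]_n)
    (a : 'M[R]_k) :
  compact_simple_lie br -> posdef_sym a ->
  naturally_reductive br a <-> exists g, nr_weights a g.
Proof.
move=> br_cpt a_pd; have a_sym : a^T = a by case: a_pd.
have br_lie : is_lie_bracket br by case: br_cpt => [[]].
rewrite natred_retractionP //; split=> [[q q_ret q_nr] | [g wg]]; last first.
  exists (hpart g : {linear _ -> _}); first exact: hpart_retraction.
  apply/(retraction_defectP br_lie a_sym br_cpt (hpart_retraction g br_lie)) => X hX i.
  by apply: (hpart_defect (g := g)) => // l; rewrite lt0r_neq0 ?posdef_diag.
have q_def := (retraction_defectP br_lie a_sym br_cpt q_ret).1 q_nr.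
have eqs := retraction_weight_eqs br_cpt q_ret q_def.
have [k_le1 | k_gt1] := leqP k 1.
  exists (fun=> 0) => l j; apply: contraNeq => _; apply/eqP/val_inj => /=.
  by have := ltn_ord l; have := ltn_ord j; lia.
pose i0 := Ordinal (ltnW k_gt1); pose i1 := Ordinal k_gt1.
have i01 : i0 != i1 by [].
have [g thg] := weight_eqs_scalar i01 (lt0r_neq0 (posdef_diag a_pd i0))
  (lt0r_neq0 (posdef_det2 a_pd i01)) eqs.
exists g => l j lj; case: br_cpt => [[_ [[X [Y XY_neq0]] _]] _].
move: (eqs l j lj (br X Y)); rewrite !thg -{2}[br X Y]scale1r -scalerBl !scalerA -scalerDl.
by move/eqP; rewrite scaler_eq0 (negbTE XY_neq0) orbF => /eqP.
Qed.

Theorem mainTheorem2 (R : rcfType) (n k : nat)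
    (br : 'rV[R]_n -> 'rV[R]_n -> 'rV[R]_n) (a : 'M[R]_k) :
  compact_simple_lie br -> (1 <= k)%N -> posdef_sym a ->
  (naturally_reductive br a <-> cond_a a \/ cond_b a \/ cond_c a).
Proof.
move=> br_cpt k_gt0 a_pd; rewrite natred_nr_weightsP //.
by split=> [[g wg] | conds]; [exact: nr_weights_cond wg | exact: cond_nr_weights].
Qed.
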